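(* (a) The one-dimensional completely elliptic subspaces of $\mathbb{R}^3$ are exactly the four lines spanned by $(1,1,1)$, $(-1,1,1)$, $(1,-1,1)$, $(1,1,-1)$. (b) A two-dimensional subspace $S\subset\mathbb{R}^3$ with unit normal vector $\mathbf{w}=(w_1,w_2,w_3)$ is completely elliptic if and only if either $(w_1+w_2-w_3)(w_1-w_2+w_3)(-w_1+w_2+w_3)(w_1+w_2+w_3)>0$, or $\mathbf{w}$ is, up to sign, a unit multiple of one of the six vectors $(0,1,1)$, $(0,1,-1)$, $(1,0,1)$, $(1,0,-1)$, $(1,1,0)$, $(1,-1,0)$.
   Context: A linear subspace $S\subseteq\mathbb{R}^N$ of dimension $M$ is called completely elliptic if there exists a real $N\times M$ matrix $\mathbf{s}$ whose $M$ columns lie in $S$, whose $N$ rows are unit vectors of $\mathbb{R}^M$, and with $\operatorname{rank}\mathbf{s}=M$ (equivalently, the columns of $\mathbf{s}$ form a basis of $S$). Here $N=3$. *)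

From mathcomp Require Import all_boot all_order all_algebra.
From mathcomp Require Import reals.
Set Implicit Arguments. Unset Strict Implicit. Unset Printing Implicit Defensive.
Import Order.TTheory GRing.Theory Num.Theory.
Local Open Scope ring_scope.

(* A linear subspace of R^N is represented (MathComp mxalgebra style) by a
   matrix S : 'M_N whose row space is the subspace; its dimension is \rank S. *)

Definition vec3 (R : realType) (a b c : R) : 'rV[R]_3 :=
  \row_(i < 3) nth 0 [:: a; b; c] i.

Definition coord3 (R : realType) (w : 'rV[R]_3) (k : nat) : R :=
  w ord0 (inord k).

(* S (of dimension M) is completely elliptic: there is an N x M real matrix
   s whose M columns lie in S, whose N rows are unit vectors of R^M, and with
   rank s = M.  "Columns of s lie in S" = the rows of s^T lie in the row space
   of S. *)
Definition completely_elliptic (R : realType) (N M : nat) (S : 'M[R]_N) : Prop :=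
  \rank S = M /\
  exists s : 'M[R]_(N, M),
    [/\ (s^T <= S)%MS,
        (forall i : 'I_N, \sum_(j < M) s i j ^+ 2 = 1)
      & \rank s = M].

(* Part (a): the rows of a 3 x 1 matrix with unit rows are +-1, so a completely
   elliptic line is spanned by a sign vector, i.e. by one of the four vectors of
   the statement up to sign.
   Part (b): for S = w^perp, the columns of s lie in S iff w s = 0, i.e. the rows
   u_i of s are unit vectors of R^2 with w_0 u_0 + w_1 u_1 + w_2 u_2 = 0, and
   rank s = 2 iff the u_i are not all parallel.  This closing relation forces
   H(w) = 4 (w_0 w_1 det(u_0, u_1))^2 (Heron's formula for the triangle with
   sides |w_i|), so H(w) >= 0, and H(w) = 0 with all w_i nonzero makes all the
   u_i parallel; when some w_i = 0 the other two have equal absolute values.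
   Conversely, H(w) > 0 lets one draw the triangle by the law of cosines, and
   the six degenerate directions have explicit frames. *)

From mathcomp Require Import all_boot all_order all_algebra.
From mathcomp Require Import reals.
From mathcomp Require Import ring lra.
Import Order.TTheory GRing.Theory Num.Theory.
Local Open Scope ring_scope.
Set Implicit Arguments. Unset Strict Implicit.

Lemma sum_ord2 (V : nmodType) (f : 'I_2 -> V) : \sum_i f i = f 0 + f 1.
Proof. by rewrite !big_ord_recr big_ord0 /= add0r; congr (f _ + f _); apply: val_inj. Qed.

Lemma sum_ord3 (V : nmodType) (f : 'I_3 -> V) : \sum_i f i = f 0 + f 1 + f 2.
Proof.
by rewrite !big_ord_recr big_ord0 /= add0r; congr (f _ + f _ + f _); apply: val_inj.
Qed.

Lemma forall_ord2 (P : 'I_2 -> Prop) : P 0 -> P 1 -> forall i, P i.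
Proof.
by move=> P0 P1 [[|[|//]] ?];
  [rewrite (_ : Ordinal _ = 0) | rewrite (_ : Ordinal _ = 1)] => //; apply: val_inj.
Qed.

Lemma forall_ord3 (P : 'I_3 -> Prop) : P 0 -> P 1 -> P 2 -> forall i, P i.
Proof.
by move=> P0 P1 P2 [[|[|[|//]]] ?]; [rewrite (_ : Ordinal _ = 0)
  | rewrite (_ : Ordinal _ = 1) | rewrite (_ : Ordinal _ = 2)] => //; apply: val_inj.
Qed.

Lemma eq_rV2 (T : Type) (x y : 'rV[T]_2) : x 0 0 = y 0 0 -> x 0 1 = y 0 1 -> x = y.
Proof. by move=> e0 e1; apply/rowP; apply: forall_ord2. Qed.

Lemma eq_rV3 (T : Type) (x y : 'rV[T]_3) :
  x 0 0 = y 0 0 -> x 0 1 = y 0 1 -> x 0 2 = y 0 2 -> x = y.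
Proof. by move=> e0 e1 e2; apply/rowP; apply: forall_ord3. Qed.

Section Hyperplane.
Variables (F : fieldType) (n : nat) (S : 'M[F]_n) (w : 'rV[F]_n).
Hypotheses (rankS : \rank S = n.-1) (w_neq0 : w != 0) (Sw : S *m w^T = 0).

Lemma sub_hyperplaneE m (x : 'M_(m, n)) : (x <= S)%MS = (x *m w^T == 0).
Proof.
have SK : (S <= kermx w^T)%MS by apply/sub_kermxP.
have /eqmxP -> : (S == kermx w^T)%MS.
  by rewrite -(mxrank_leqif_eq SK).2 rankS mxrank_ker mxrank_tr rank_rV w_neq0 subn1.
exact: sub_kermx.
Qed.

End Hyperplane.

Section RankTwo.
Variables (F : fieldType) (m : nat).

Definition minor2 (s : 'M[F]_(m, 2)) (i j : 'I_m) := s i 0 * s j 1 - s j 0 * s i 1.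

Lemma rank2P (s : 'M[F]_(m, 2)) :
  reflect (forall x : 'rV_2, x *m s^T = 0 -> x = 0) (\rank s == 2).
Proof.
rewrite -mxrank_tr -[_ == 2]/(row_free s^T) -kermx_eq0.
by apply: (iffP rowV0P) => ker0 x /sub_kermxP; apply: ker0.
Qed.

Lemma mulmx_trE (x : 'rV[F]_2) (s : 'M[F]_(m, 2)) j :
  (x *m s^T) 0 j = x 0 0 * s j 0 + x 0 1 * s j 1.
Proof. by rewrite mxE sum_ord2 !mxE. Qed.

Lemma minor2_rank (s : 'M[F]_(m, 2)) i j : minor2 s i j != 0 -> \rank s = 2.
Proof.
move=> minor_neq0; apply/eqP/rank2P => x /rowP xs0.
have x_ker k : x 0 0 * s k 0 + x 0 1 * s k 1 = 0 by rewrite -mulmx_trE xs0 mxE.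
have cancel_minor y : y * minor2 s i j = 0 -> y = 0.
  by move/eqP; rewrite mulf_eq0 (negbTE minor_neq0) orbF => /eqP.
apply: eq_rV2; rewrite mxE; apply: cancel_minor.
  transitivity (s j 1 * (x 0 0 * s i 0 + x 0 1 * s i 1)
                - s i 1 * (x 0 0 * s j 0 + x 0 1 * s j 1)).
    by rewrite /minor2; ring.
  by rewrite !x_ker; ring.
transitivity (s i 0 * (x 0 0 * s j 0 + x 0 1 * s j 1)
              - s j 0 * (x 0 0 * s i 0 + x 0 1 * s i 1)).
  by rewrite /minor2; ring.
by rewrite !x_ker; ring.
Qed.

Lemma rank2_minor2 (s : 'M[F]_(m, 2)) i :
  \rank s = 2 -> (forall j, minor2 s i j = 0) -> row i s = 0.
Proof.
move=> /eqP/rank2P rank2 minors0.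
pose x : 'rV_2 := \row_k (if k == 0 then - s i 1 else s i 0).
have /rowP x0 : x = 0.
  by apply: rank2; apply/rowP => j; rewrite mulmx_trE !mxE /= -(minors0 j) /minor2; ring.
have := x0 0; have := x0 1; rewrite !mxE /= => s_i0 /eqP; rewrite oppr_eq0 => /eqP s_i1.
by apply: eq_rV2; rewrite !mxE.
Qed.

End RankTwo.

Section Heron.
Variable R : rcfType.
Implicit Types a b c : R.

Definition heron a b c := (a + b - c) * (a - b + c) * (- a + b + c) * (a + b + c).

Definition face_diagonal a b c :=
  [\/ a = 0 /\ b ^+ 2 = c ^+ 2, b = 0 /\ c ^+ 2 = a ^+ 2 | c = 0 /\ a ^+ 2 = b ^+ 2].

Lemma heron_rotate a b c : heron a b c = heron c a b.
Proof. by rewrite /heron; ring. Qed.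

Lemma heron_side0 a b c : a * b * c = 0 ->
  exists d, heron a b c = - d ^+ 2 /\ (d = 0 -> face_diagonal a b c).
Proof.
move/eqP; rewrite !mulf_eq0 => /orP[/orP[]|] /eqP side0.
- exists (b ^+ 2 - c ^+ 2); split; first by rewrite side0 /heron; ring.
  by move/eqP; rewrite subr_eq0 => /eqP; constructor 1.
- exists (c ^+ 2 - a ^+ 2); split; first by rewrite side0 /heron; ring.
  by move/eqP; rewrite subr_eq0 => /eqP; constructor 2.
exists (a ^+ 2 - b ^+ 2); split; first by rewrite side0 /heron; ring.
by move/eqP; rewrite subr_eq0 => /eqP; constructor 3.
Qed.

Lemma heron_unit_closing a b c x0 y0 x1 y1 x2 y2 :
  x0 ^+ 2 + y0 ^+ 2 = 1 -> x1 ^+ 2 + y1 ^+ 2 = 1 -> x2 ^+ 2 + y2 ^+ 2 = 1 ->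
  a * x0 + b * x1 + c * x2 = 0 -> a * y0 + b * y1 + c * y2 = 0 ->
  heron a b c = 4 * (a * b * (x0 * y1 - x1 * y0)) ^+ 2.
Proof.
move=> u0 u1 u2 close_x close_y.
set g := x0 * x1 + y0 * y1.
have lagrange : (x0 * y1 - x1 * y0) ^+ 2 = 1 - g ^+ 2.
  transitivity ((x0 ^+ 2 + y0 ^+ 2) * (x1 ^+ 2 + y1 ^+ 2) - g ^+ 2).
    by rewrite /g; ring.
  by rewrite u0 u1 mulr1.
have cosines : c ^+ 2 = a ^+ 2 + b ^+ 2 + 2 * a * b * g.
  have -> : c ^+ 2 = (c * x2) ^+ 2 + (c * y2) ^+ 2.
    by rewrite -[LHS]mulr1 -u2; ring.
  have -> : c * x2 = - (a * x0 + b * x1) by lra.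
  have -> : c * y2 = - (a * y0 + b * y1) by lra.
  transitivity (a ^+ 2 * (x0 ^+ 2 + y0 ^+ 2) + b ^+ 2 * (x1 ^+ 2 + y1 ^+ 2)
                + 2 * a * b * g); first by rewrite /g; ring.
  by rewrite u0 u1 !mulr1.
transitivity (4 * a ^+ 2 * b ^+ 2 - (c ^+ 2 - a ^+ 2 - b ^+ 2) ^+ 2).
  by rewrite /heron; ring.
by rewrite !exprMn lagrange cosines; ring.
Qed.

End Heron.

Section CompletelyElliptic.
Variable R : realType.
Implicit Types a b c : R.

Lemma vec3_coord3 (w : 'rV[R]_3) : w = vec3 (coord3 w 0) (coord3 w 1) (coord3 w 2).
Proof.
by apply: eq_rV3; rewrite mxE /coord3; congr (w _ _); apply: val_inj; rewrite /= inordK.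
Qed.

Lemma vec3_eta (v : 'rV[R]_3) : v = vec3 (v 0 0) (v 0 1) (v 0 2).
Proof. by apply: eq_rV3; rewrite mxE. Qed.

Lemma scale_vec3 k a b c : k *: vec3 a b c = vec3 (k * a) (k * b) (k * c).
Proof. by apply: eq_rV3; rewrite !mxE. Qed.

Lemma vec3_inj a b c a' b' c' :
  vec3 a b c = vec3 a' b' c' -> [/\ a = a', b = b' & c = c'].
Proof.
by move/rowP=> e; split; [move: (e 0) | move: (e 1) | move: (e 2)]; rewrite !mxE.
Qed.

Lemma vec3_mulmxE a b c n (s : 'M[R]_(3, n)) j :
  (vec3 a b c *m s) 0 j = a * s 0 j + b * s 1 j + c * s 2 j.
Proof. by rewrite mxE sum_ord3 !mxE. Qed.

Lemma eqmx_vec3N (S : 'M[R]_3) a b c :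
  (S == vec3 a b c)%MS = (S == vec3 (- a) (- b) (- c))%MS.
Proof.
have -> : vec3 (- a) (- b) (- c) = - vec3 a b c by apply: eq_rV3; rewrite !mxE.
by rewrite !eqmx_opp.
Qed.

Lemma completely_elliptic1P n (S : 'M[R]_n) : \rank S = 1 ->
  completely_elliptic 1 S <->
  exists v : 'rV_n, (forall i, v 0 i ^+ 2 = 1) /\ (S == v)%MS.
Proof.
move=> rankS; split=> [[_ [s [sS s_unit rank_s]]] | [v [v_sign Sv]]].
  exists s^T; split=> [i|]; first by rewrite mxE -(s_unit i) big_ord1.
  by rewrite andbC -(mxrank_leqif_eq sS).2 mxrank_tr rank_s rankS.
split=> //; exists v^T; split=> [|i|].
- by rewrite trmxK; case/andP: Sv.
- by rewrite big_ord1 mxE v_sign.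
by rewrite mxrank_tr -(eqmxP Sv).
Qed.

Lemma sign_vector3P (S : 'M[R]_3) :
  (exists v : 'rV_3, (forall i, v 0 i ^+ 2 = 1) /\ (S == v)%MS) <->
  [\/ (S == vec3 1 1 1)%MS, (S == vec3 (-1) 1 1)%MS,
      (S == vec3 1 (-1) 1)%MS | (S == vec3 1 1 (-1))%MS].
Proof.
split=> [[v [v_sign]] | ].
  have sign i : v 0 i = 1 \/ v 0 i = -1.
    by have /eqP := v_sign i; rewrite sqrf_eq1 => /orP[] /eqP; [left | right].
  rewrite (vec3_eta v) => Sv; apply/or4P.
  by case: (sign 0) Sv => ->; case: (sign 1) => ->; case: (sign 2) => ->;
    rewrite ?[(S == vec3 _ _ (-1))%MS]eqmx_vec3N ?opprK => ->; rewrite ?orbT.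
have sign_vec3 a b c : a ^+ 2 = 1 -> b ^+ 2 = 1 -> c ^+ 2 = 1 ->
    forall i, vec3 a b c 0 i ^+ 2 = 1.
  by move=> a1 b1 c1; apply: forall_ord3; rewrite mxE.
by case=> Sv; (eexists; split; last exact: Sv); apply: sign_vec3;
  rewrite ?sqrrN expr1n.
Qed.

Definition unit_frame n M (w : 'rV[R]_n) (s : 'M[R]_(n, M)) :=
  [/\ w *m s = 0, forall i, \sum_j s i j ^+ 2 = 1 & \rank s = M].

Lemma completely_elliptic_hyperplane n (S : 'M[R]_n) (w : 'rV_n) :
  \rank S = n.-1 -> w != 0 -> S *m w^T = 0 ->
  completely_elliptic n.-1 S <-> exists s : 'M_(n, n.-1), unit_frame w s.
Proof.
move=> rankS w_neq0 Sw.
have sub_frame (s : 'M_(n, n.-1)) : (s^T <= S)%MS = (w *m s == 0).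
  by rewrite (sub_hyperplaneE rankS w_neq0 Sw) -trmx_mul trmx_eq0.
split=> [[_ [s [sS s_unit rank_s]]] | [s [ws s_unit rank_s]]].
  by exists s; split=> //; apply/eqP; rewrite -sub_frame.
by split=> //; exists s; split=> //; rewrite sub_frame ws.
Qed.

Definition mx3x2 (x0 y0 x1 y1 x2 y2 : R) : 'M[R]_(3, 2) :=
  \matrix_(i, j) nth 0 (nth [::] [:: [:: x0; y0]; [:: x1; y1]; [:: x2; y2]] i) j.

Lemma unit_frame_mx3x2 a b c x0 y0 x1 y1 x2 y2 :
  x0 ^+ 2 + y0 ^+ 2 = 1 -> x1 ^+ 2 + y1 ^+ 2 = 1 -> x2 ^+ 2 + y2 ^+ 2 = 1 ->
  a * x0 + b * x1 + c * x2 = 0 -> a * y0 + b * y1 + c * y2 = 0 ->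
  x0 * y1 - x1 * y0 != 0 \/ x0 * y2 - x2 * y0 != 0 ->
  unit_frame (vec3 a b c) (mx3x2 x0 y0 x1 y1 x2 y2).
Proof.
move=> u0 u1 u2 close_x close_y minor_neq0; split.
- by apply: eq_rV2; rewrite vec3_mulmxE !mxE.
- by apply: forall_ord3; rewrite sum_ord2 !mxE.
case: minor_neq0 => minor_neq0.
  by apply: (minor2_rank (i := 0) (j := 1)); rewrite /minor2 !mxE.
by apply: (minor2_rank (i := 0) (j := 2)); rewrite /minor2 !mxE.
Qed.

Lemma heron_gt0_or_face_diagonal a b c (s : 'M[R]_(3, 2)) :
  unit_frame (vec3 a b c) s -> 0 < heron a b c \/ face_diagonal a b c.
Proof.
case=> /rowP ws s_unit rank_s.
have u i : s i 0 ^+ 2 + s i 1 ^+ 2 = 1 by rewrite -(s_unit i) sum_ord2.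
have close j : a * s 0 j + b * s 1 j + c * s 2 j = 0 by rewrite -vec3_mulmxE ws mxE.
have heron01 : heron a b c = 4 * (a * b * minor2 s 0 1) ^+ 2.
  exact: heron_unit_closing (u 0) (u 1) (u 2) (close 0) (close 1).
have heron20 : heron a b c = 4 * (c * a * minor2 s 2 0) ^+ 2.
  rewrite heron_rotate; apply: heron_unit_closing (u 2) (u 0) (u 1) _ _.
    by rewrite -(close 0); ring.
  by rewrite -(close 1); ring.
have heron_ge0 : 0 <= heron a b c by rewrite heron01 mulr_ge0 ?sqr_ge0.
have [abc0 | abc_neq0] := eqVneq (a * b * c) 0.
  have [d [heron_d face_d]] := heron_side0 abc0.
  right; apply/face_d/eqP.
  by rewrite -sqrf_eq0 eq_le sqr_ge0 andbT -oppr_ge0 -heron_d.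
left; rewrite lt_def heron_ge0 andbT; apply/eqP => heron0.
move: abc_neq0; rewrite !mulf_eq0 !negb_or => /andP[/andP[a_neq0 b_neq0] c_neq0].
have minor0 x y z : x != 0 -> y != 0 -> heron a b c = 4 * (x * y * z) ^+ 2 -> z = 0.
  move=> x_neq0 y_neq0; rewrite heron0 => /esym/eqP.
  rewrite mulf_eq0 pnatr_eq0 /= sqrf_eq0 !mulf_eq0.
  by rewrite (negbTE x_neq0) (negbTE y_neq0) => /eqP.
have minor01 := minor0 _ _ _ a_neq0 b_neq0 heron01.
have minor20 := minor0 _ _ _ c_neq0 a_neq0 heron20.
have /rowP row0 : row 0 s = 0.
  apply: rank2_minor2 rank_s _; apply: forall_ord3 => //; first by rewrite /minor2; ring.
  by transitivity (- minor2 s 2 0); [rewrite /minor2; ring | rewrite minor20 oppr0].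
have := u 0; have := row0 0; have := row0 1; rewrite !mxE => -> ->.
by rewrite expr0n addr0 => /eqP; rewrite eq_sym oner_eq0.
Qed.

Lemma unit_frame_of_heron_gt0 a b c :
  0 < heron a b c -> exists s : 'M_(3, 2), unit_frame (vec3 a b c) s.
Proof.
move=> heron_gt0.
have : a * b * c != 0.
  apply/eqP => /heron_side0 [d [heron_d _]].
  by move: heron_gt0; rewrite heron_d oppr_gt0 ltNge sqr_ge0.
rewrite !mulf_eq0 !negb_or => /andP[/andP[a_neq0 b_neq0] c_neq0].
(* u_0 = (1, 0) and u_1 = (p, q) make the angle given by the law of cosines,
   and u_2 closes the triangle. *)
pose p := (c ^+ 2 - a ^+ 2 - b ^+ 2) / (2 * a * b).
have p_heron : (1 - p ^+ 2) * (4 * a ^+ 2 * b ^+ 2) = heron a b c.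
  by rewrite /p /heron; field; rewrite a_neq0 b_neq0.
have p2_lt1 : 0 < 1 - p ^+ 2.
  have ab_gt0 : 0 < 4 * a ^+ 2 * b ^+ 2.
    by rewrite mulr_gt0 ?(mulr_gt0 (ltr0n _ 4)) ?exprn_even_gt0.
  by rewrite -(pmulr_lgt0 _ ab_gt0) p_heron.
pose q := Num.sqrt (1 - p ^+ 2).
have q2 : q ^+ 2 = 1 - p ^+ 2 by rewrite sqr_sqrtr // ltW.
exists (mx3x2 1 0 p q (- (a + b * p) / c) (- (b * q) / c)).
apply: unit_frame_mx3x2.
- by ring.
- by rewrite q2; ring.
- have -> : (- (a + b * p) / c) ^+ 2 + (- (b * q) / c) ^+ 2
      = (a ^+ 2 + 2 * a * b * p + b ^+ 2 * (p ^+ 2 + q ^+ 2)) / c ^+ 2.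
    by field.
  by rewrite q2 /p; field; rewrite a_neq0 b_neq0 c_neq0.
- by field.
- by field.
by left; rewrite mul1r mulr0 subr0 sqrtr_eq0 -ltNge.
Qed.

Lemma unit_frame_of_face_diagonal a b c :
  face_diagonal a b c -> exists s : 'M_(3, 2), unit_frame (vec3 a b c) s.
Proof.
case=> -[-> /eqP]; rewrite eqf_sqr => /orP[] /eqP ->; eexists;
  [ apply: (@unit_frame_mx3x2 _ _ _ 0 1 1 0 (-1) 0)
  | apply: (@unit_frame_mx3x2 _ _ _ 0 1 1 0 1 0)
  | apply: (@unit_frame_mx3x2 _ _ _ 1 0 0 1 (-1) 0)
  | apply: (@unit_frame_mx3x2 _ _ _ 1 0 0 1 1 0)
  | apply: (@unit_frame_mx3x2 _ _ _ 1 0 (-1) 0 0 1)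
  | apply: (@unit_frame_mx3x2 _ _ _ 1 0 1 0 0 1) ];
  try ring; by (left + right); apply/eqP => ?; lra.
Qed.

Lemma face_diagonalP a b c :
  face_diagonal a b c <->
  exists2 v, v \in [:: vec3 0 1 1; vec3 0 1 (-1); vec3 1 0 1;
                      vec3 1 0 (-1); vec3 1 1 0; vec3 1 (-1) 0]
           & exists k, vec3 a b c = k *: v.
Proof.
split=> [|[v v_in [k]]].
  case=> -[-> /eqP]; rewrite eqf_sqr => /orP[] /eqP ->;
    [ exists (vec3 0 1 1); last exists c | exists (vec3 0 1 (-1)); last exists (- c)
    | exists (vec3 1 0 1); last exists a | exists (vec3 1 0 (-1)); last exists a
    | exists (vec3 1 1 0); last exists b | exists (vec3 1 (-1) 0); last exists (- b) ];
    by rewrite ?inE ?eqxx ?orbT // scale_vec3; congr vec3; ring.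
move: v_in; rewrite !inE;
  move=> /orP[/eqP->|/orP[/eqP->|/orP[/eqP->|/orP[/eqP->|/orP[/eqP->|/eqP->]]]]];
  rewrite scale_vec3 => /vec3_inj[-> -> ->];
  by (constructor 1 + constructor 2 + constructor 3); split; ring.
Qed.

Lemma unit_frame_existsP a b c :
  (exists s : 'M_(3, 2), unit_frame (vec3 a b c) s) <->
  0 < heron a b c \/ face_diagonal a b c.
Proof.
split=> [[s /heron_gt0_or_face_diagonal] //|].
by case=> [/unit_frame_of_heron_gt0 | /unit_frame_of_face_diagonal].
Qed.

End CompletelyElliptic.

Theorem mainTheorem3 (R : realType) :
  (* (a) one-dimensional subspaces *)
  (forall S : 'M[R]_3, \rank S = 1%N ->
     (completely_elliptic 1 S <->
        [\/ (S == vec3 1 1 1)%MS, (S == vec3 (-1) 1 1)%MS,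
            (S == vec3 1 (-1) 1)%MS | (S == vec3 1 1 (-1))%MS]))
  /\
  (* (b) two-dimensional subspaces with unit normal vector w *)
  (forall (S : 'M[R]_3) (w : 'rV[R]_3), \rank S = 2%N ->
     \sum_(j < 3) w ord0 j ^+ 2 = 1 ->
     S *m w^T = 0 ->
     (completely_elliptic 2 S <->
        ((coord3 w 0 + coord3 w 1 - coord3 w 2) *
         (coord3 w 0 - coord3 w 1 + coord3 w 2) *
         (- coord3 w 0 + coord3 w 1 + coord3 w 2) *
         (coord3 w 0 + coord3 w 1 + coord3 w 2) > 0
         \/
         exists2 v : 'rV[R]_3,
           v \in [:: vec3 0 1 1; vec3 0 1 (-1); vec3 1 0 1;
                     vec3 1 0 (-1); vec3 1 1 0; vec3 1 (-1) 0]
           & exists c : R, w = c *: v))).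
Proof.
split=> [S rankS | S w rankS w_unit Sw].
  exact: iff_trans (completely_elliptic1P rankS) (sign_vector3P S).
have w_neq0 : w != 0.
  apply/eqP => w0; move: w_unit; rewrite w0 sum_ord3 !mxE expr0n /= !addr0 => /eqP.
  by rewrite eq_sym oner_eq0.
apply: iff_trans (completely_elliptic_hyperplane rankS w_neq0 Sw) _.
have := vec3_coord3 w; move: (coord3 w 0) (coord3 w 1) (coord3 w 2) => a b c ->.
apply: iff_trans (unit_frame_existsP a b c) _.
by rewrite face_diagonalP.
Qed.
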